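(* Let $\mathbb L$ be a combinatorially indecomposable tropical Lagrangian multi-section of rank $r$ over a complete fan $\Sigma$ in $N_{\mathbb R}\cong\mathbb R^n$. For any $\tau\in\Sigma(n-1)$ and any cone $\omega'$ of $L$, the endomorphism $N_\tau(\omega')$ is nilpotent, and for any distinct cones $\omega'\ne\omega''$ of $L$ lying over the same cone $\omega\in\Sigma$, $N_\tau(\omega')N_\tau(\omega'')=0$. In particular, $[N_\tau(\omega'),N_\tau(\omega'')]=0$ for any cones $\omega',\omega''$ of $L$ lying over the same $\omega$.
   Context: $N$ lattice of rank $n$, $M=\mathrm{Hom}(N,\mathbb Z)$, $\Sigma(k)$ the $k$-dimensional cones of $\Sigma$, $\tau^\vee$ the dual cone, $U(\tau)=\mathrm{Spec}\,\mathbb C[\tau^\vee\cap M]$, $z^m$ monomials. $\mathbb L=(L,\Sigma_L,\mu,\pi,\varphi)$: $(L,\Sigma_L)$ a cone complex (finite union of closed cones each identified with a rational polyhedral cone, faces being cones, $L$ the disjoint union of relative interiors), $\mu$ a positive integer weight constant on relative interiors, $\pi$ a branched covering onto $(N_{\mathbb R},\Sigma)$ mapping cones homeomorphically onto cones with weighted fibre count $r$, $\varphi$ continuous and integral linear on each cone. $m(\sigma')\in M$ is the slope of $\varphi$ on a maximal cone $\sigma'$; for $\sigma\in\Sigma(n)$, $\sigma^{(1)},\dots,\sigma^{(r)}$ are its lifts listed with multiplicity. Combinatorially indecomposable: not combinatorially equivalent to a combinatorial union of two connected tropical Lagrangian multi-sections; such $\mathbb L$ is $(n-1)$-separable, i.e.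 distinct lifts of any $\tau\in\Sigma(n-1)$ carry distinct restrictions of $\varphi$, and its ramification locus lies in the union of cones of dimension $\le n-2$. $N_\tau(\omega')$: let $\tau=\sigma_1\cap\sigma_2$ with $\sigma_1,\sigma_2\in\Sigma(n)$. $N_\tau(\omega')$ is the endomorphism of the trivial rank $r$ bundle on $U(\tau)$ with frame $\{1(\sigma_1^{(\alpha)})\}$ whose $(\alpha,\beta)$-entry is $n^{(\alpha\beta)}_\tau(\omega')z^{m(\sigma_1^{(\alpha)})-m(\sigma_1^{(\beta)})}$, for arbitrary fixed constants $n^{(\alpha\beta)}_\tau(\omega')\in\mathbb C$, if $\omega'\subset\sigma_1^{(\alpha)}\cap\sigma_1^{(\beta)}$, $\alpha\ne\beta$ and $m(\sigma_1^{(\alpha)})-m(\sigma_1^{(\beta)})\in\tau^\vee\cap M$, and $0$ otherwise. *)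

From HB Require Import structures.
From mathcomp Require Import all_boot all_order all_algebra.
From mathcomp Require Import reals.
From mathcomp.real_closed Require Import complex.
From mathcomp Require Import mpoly.
From Stdlib Require Import ClassicalEpsilon.

Set Implicit Arguments.
Unset Strict Implicit.
Unset Printing Implicit Defensive.

Import GRing.Theory Num.Theory.
Local Open Scope ring_scope.

Section TLMS.
Variables (R : realType) (n : nat).

(* N = M = Z^n (row vectors), N_R = R^n; <m, v> is the natural pairing. *)
Definition pairMR (m : 'rV[int]_n) (v : 'rV[R]_n) : R :=
  \sum_(i < n) (m 0 i)%:~R * v 0 i.
Definition dotR (u v : 'rV[R]_n) : R := \sum_(i < n) u 0 i * v 0 i.
Definition toR (g : 'rV[int]_n) : 'rV[R]_n := map_mx (fun z : int => z%:~R) g.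

Definition cone_of (g : seq 'rV[int]_n) (v : 'rV[R]_n) : Prop :=
  exists a : 'I_(size g) -> R,
    (forall i, 0 <= a i) /\ v = \sum_(i < size g) a i *: toR g`_i.

Definition cone_dim (g : seq 'rV[int]_n) : nat :=
  \rank (\matrix_(i < size g, j < n) ((g`_i) 0 j)%:~R : 'M[R]_(size g, n)).

Definition is_face (A B : 'rV[R]_n -> Prop) : Prop :=
  exists u : 'rV[R]_n,
    (forall v, B v -> 0 <= dotR u v) /\
    (forall v, A v <-> (B v /\ dotR u v = 0)).

Definition same_set (A B : 'rV[R]_n -> Prop) : Prop := forall v, A v <-> B v.

Definition is_fan (Sig : finType) (gens : Sig -> seq 'rV[int]_n) : Prop :=
  [/\ forall s t, same_set (cone_of (gens s)) (cone_of (gens t)) -> s = t,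
      forall s v, cone_of (gens s) v -> cone_of (gens s) (- v) -> v = 0,
      forall s (F : 'rV[R]_n -> Prop), is_face F (cone_of (gens s)) ->
        exists t, same_set (cone_of (gens t)) F &
      forall s t,
        is_face (fun v => cone_of (gens s) v /\ cone_of (gens t) v)
                (cone_of (gens s))].

Definition complete_fan (Sig : finType) (gens : Sig -> seq 'rV[int]_n) : Prop :=
  is_fan gens /\ forall v : 'rV[R]_n, exists s, cone_of (gens s) v.

Definition sface (Sig : finType) (gens : Sig -> seq 'rV[int]_n) (t s : Sig) :=
  is_face (cone_of (gens t)) (cone_of (gens s)).

(* Tropical Lagrangian multi-section of rank r over the fan (Sig, gens):
   Lc = cones of L, lface d c <-> d is a face of c (d is contained in c),
   pi c = the cone of Sigma onto which c is mapped homeomorphically,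
   mu c = the weight on the relative interior of c,
   slope c = an element of M with phi(x) = <slope c, pi x> for x in c. *)
Definition is_TLMS (Sig : finType) (gens : Sig -> seq 'rV[int]_n)
  (Lc : finType) (lface : rel Lc) (pi : Lc -> Sig) (mu : Lc -> nat)
  (slope : Lc -> 'rV[int]_n) (r : nat) : Prop :=
  [/\
      [/\ forall c, lface c c,
          forall c d, lface c d -> lface d c -> c = d &
          forall c d e, lface c d -> lface d e -> lface c e],
      (* pi maps faces to faces, and each cone homeomorphically onto its image:
         faces of c correspond bijectively to faces of pi c *)
      forall d c, lface d c -> sface gens (pi d) (pi c),
      forall c t, sface gens t (pi c) ->
        exists d, [/\ lface d c, pi d = t &
                      forall d', lface d' c -> pi d' = t -> d' = d],
      (* positive weights; branched covering with weighted fibre count r *)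
      [/\ forall c, (0 < mu c)%N,
          forall s, (\sum_(c | pi c == s) mu c)%N = r &
          forall d s, sface gens (pi d) s ->
            (\sum_(c | lface d c && (pi c == s)) mu c)%N = mu d] &
      (* phi continuous: restrictions agree on common faces *)
      forall d c, lface d c -> forall v, cone_of (gens (pi d)) v ->
        pairMR (slope c) v = pairMR (slope d) v].

Definition separable_codim1 (Sig : finType) (gens : Sig -> seq 'rV[int]_n)
  (Lc : finType) (pi : Lc -> Sig) (slope : Lc -> 'rV[int]_n) : Prop :=
  forall tau, (cone_dim (gens tau)).+1 = n ->
  forall t1 t2, pi t1 = tau -> pi t2 = tau -> t1 <> t2 ->
    exists v, cone_of (gens tau) v /\ pairMR (slope t1) v <> pairMR (slope t2) v.

Definition ramification_codim2 (Sig : finType) (gens : Sig -> seq 'rV[int]_n)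
  (Lc : finType) (pi : Lc -> Sig) (mu : Lc -> nat) : Prop :=
  forall c, (1 < mu c)%N -> ((cone_dim (gens (pi c))).+2 <= n)%N.

(* consequences of combinatorial indecomposability recorded in the paper *)
Definition comb_indecomposable (Sig : finType) (gens : Sig -> seq 'rV[int]_n)
  (Lc : finType) (pi : Lc -> Sig) (mu : Lc -> nat)
  (slope : Lc -> 'rV[int]_n) : Prop :=
  separable_codim1 gens pi slope /\ ramification_codim2 gens pi mu.

Definition in_dual (g : seq 'rV[int]_n) (m : 'rV[int]_n) : Prop :=
  forall v, cone_of g v -> 0 <= pairMR m v.

(* The Laurent monomial z^m, inside the fraction field of C[z_1..z_n]
   (which contains C[M] and hence C[tau^dual cap M]). *)
Definition CC := complex R.
Definition Frac := {fraction {mpoly CC[n]}}.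
Definition zmon (m : 'rV[int]_n) : Frac :=
  \prod_(i < n) (tofrac ('X_i : {mpoly CC[n]})) ^ (m 0 i).

(* N_tau(omega'): rows/columns indexed by the lifts sigma_1^(alpha) given by
   the enumeration lift : 'I_r -> Lc; ncst = the constants n^(alpha beta). *)
Definition Nmx (Sig : finType) (gens : Sig -> seq 'rV[int]_n)
  (Lc : finType) (lface : rel Lc) (slope : Lc -> 'rV[int]_n) (r : nat)
  (tau : Sig) (lift : 'I_r -> Lc) (ncst : 'I_r -> 'I_r -> CC) (w : Lc)
  : 'M[Frac]_r :=
  \matrix_(a, b)
    if lface w (lift a) && lface w (lift b) && (a != b) then
      if excluded_middle_informative
           (in_dual (gens tau) (slope (lift a) - slope (lift b)))
      then tofrac (ncst a b)%:MP * zmon (slope (lift a) - slope (lift b))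
      else 0
    else 0.

End TLMS.

From HB Require Import structures.
From mathcomp Require Import all_boot all_order all_algebra.
From mathcomp Require Import reals.
From mathcomp.real_closed Require Import complex.
From mathcomp Require Import mpoly.
From mathcomp Require Import boolp.
From Stdlib Require Import ClassicalEpsilon.

Set Implicit Arguments.
Unset Strict Implicit.
Unset Printing Implicit Defensive.

Import Order.TTheory GRing.Theory Num.Theory.
Local Open Scope ring_scope.

(* Over the maximal cone sigma_1 the multi-section is unramified, so the lifts
   sigma_1^(alpha) are distinct and N_tau(omega') is supported on the pairs
   alpha != beta with m(sigma_1^(alpha)) - m(sigma_1^(beta)) in tau^dual.
   This relation is a strict order: were both differences in tau^dual, the two
   slopes would agree on tau, so the faces of sigma_1^(alpha) and
   sigma_1^(beta) over tau (distinct, since tau is unramified) would carry the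
   same restriction of phi, against (n-1)-separability.  A matrix supported on
   a strict order is nilpotent.  For the product, a cone of L has only one
   face over each cone of the fan, so no lift contains two distinct cones over
   the same omega and every term of N_tau(omega') N_tau(omega'') vanishes. *)

Section MatrixSupport.
Variable F : pzRingType.

Lemma mx_height_nilpotent r k (A : 'M[F]_r) (h : 'I_r -> nat) :
  (forall a b, A a b != 0 -> (h a < h b)%N) -> (forall b, (h b < k)%N) ->
  A ^+ k = 0.
Proof.
move=> A_incr h_lt.
have height_exp j a b : (A ^+ j) a b != 0 -> (h a + j <= h b)%N.
  elim: j a b => [|j IHj] a b.
    by rewrite expr0 mxE addn0; case: (a =P b) => [->|]; rewrite ?eqxx.
  rewrite exprSr -mulmxE mxE => /eqP sum_neq0.
  have [c /andP[Ajac_neq0 Acb_neq0]] :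
      exists c, ((A ^+ j) a c != 0) && (A c b != 0).
    apply/existsP; apply: contra_notT sum_neq0.
    rewrite negb_exists => /forallP none.
    apply: big1 => c _; have := none c; rewrite negb_and !negbK.
    by case/orP => /eqP->; rewrite ?mul0r ?mulr0.
  by rewrite addnS (leq_ltn_trans (IHj _ _ Ajac_neq0) (A_incr _ _ Acb_neq0)).
apply/matrixP => a b; rewrite mxE; apply/eqP/negbNE/negP => /height_exp.
by rewrite leqNgt (leq_trans (h_lt b)) // leq_addl.
Qed.

Lemma mx_strict_support_nilpotent r (lt : rel 'I_r) (A : 'M[F]_r) :
  irreflexive lt -> transitive lt -> (forall a b, A a b != 0 -> lt a b) ->
  A ^+ r = 0.
Proof.
move=> lt_irr lt_trans A_lt.
pose h b := #|[pred a | lt a b]|.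
apply: (@mx_height_nilpotent _ _ _ h) => [a b /A_lt lt_ab | b].
  apply/proper_card/properP; split; last by exists a; rewrite !inE ?lt_irr.
  by apply/subsetP => c; rewrite !inE => /lt_trans; apply.
rewrite -[r in (_ < r)%N]card_ord; apply/proper_card/properP.
by split; [apply/subsetP | exists b; rewrite !inE ?lt_irr].
Qed.

Lemma mulmx_eq0_support m p q (A : 'M[F]_(m, p)) (B : 'M[F]_(p, q)) :
  (forall a b c, A a b != 0 -> B b c != 0 -> False) -> A *m B = 0.
Proof.
move=> disjoint; apply/matrixP => a c; rewrite !mxE; apply: big1 => b _.
have [->|Aab] := eqVneq (A a b) 0; first by rewrite mul0r.
have [->|Bbc] := eqVneq (B b c) 0; first by rewrite mulr0.
by case: (disjoint a b c Aab Bbc).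
Qed.

End MatrixSupport.

Section Pairing.
Variables (R : realType) (n : nat).

Lemma pairMRB (x y : 'rV[int]_n) (v : 'rV[R]_n) :
  pairMR (x - y) v = pairMR x v - pairMR y v.
Proof.
rewrite /pairMR -sumrB; apply: eq_bigr => i _.
by rewrite !mxE intrB mulrBl.
Qed.

Lemma in_dual_subr_trans (g : seq 'rV[int]_n) (x y z : 'rV[int]_n) :
  in_dual R g (x - y) -> in_dual R g (y - z) -> in_dual R g (x - z).
Proof.
move=> xy yz v gv; move: (xy v gv) (yz v gv); rewrite !pairMRB !subr_ge0.
by move=> le_yx le_zy; apply: le_trans le_yx.
Qed.

Lemma in_dual_subr_anti (g : seq 'rV[int]_n) (x y : 'rV[int]_n) (v : 'rV[R]_n) :
  in_dual R g (x - y) -> in_dual R g (y - x) -> cone_of g v ->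
  pairMR x v = pairMR y v.
Proof.
move=> xy yx gv; move: (xy v gv) (yx v gv); rewrite !pairMRB !subr_ge0.
by move=> le_yx le_xy; apply/eqP; rewrite eq_le le_yx le_xy.
Qed.

End Pairing.

Lemma sface_of_meet (R : realType) n (Sig : finType)
    (gens : Sig -> seq 'rV[int]_n) (tau s1 s2 : Sig) :
  is_fan R gens ->
  (forall v : 'rV[R]_n,
     cone_of (gens tau) v <-> cone_of (gens s1) v /\ cone_of (gens s2) v) ->
  sface R gens tau s1.
Proof.
case=> _ _ _ meet_face tau_meet; have [u [u_ge0 u_face]] := meet_face s1 s2.
by exists u; split => // v; rewrite tau_meet.
Qed.

Section Enumeration.
Variables (Lc Sig : finType) (pi : Lc -> Sig) (mu : Lc -> nat) (s : Sig).
Variables (r : nat) (lift : 'I_r -> Lc).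
Hypothesis lift_card :
  forall c, #|[set a | lift a == c]| = (if pi c == s then mu c else 0%N).

Lemma lift_over a : pi (lift a) = s.
Proof.
have := lift_card (lift a); case: eqP => // _ /eqP.
by rewrite cards_eq0 => /eqP/setP/(_ a); rewrite !inE eqxx.
Qed.

Lemma lift_inj : (forall a, mu (lift a) = 1%N) -> injective lift.
Proof.
move=> mu1 a b lift_ab.
have : (#|[set a' | lift a' == lift a]| <= 1)%N.
  by rewrite lift_card lift_over eqxx mu1.
by move/card_le1_eqP; apply; rewrite inE ?lift_ab.
Qed.

End Enumeration.

Section TropicalLagrangian.
Variables (R : realType) (n : nat).
Variables (Sig : finType) (gens : Sig -> seq 'rV[int]_n).
Variables (Lc : finType) (lface : rel Lc) (pi : Lc -> Sig) (mu : Lc -> nat).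
Variables (slope : Lc -> 'rV[int]_n) (r : nat).
Hypothesis L_TLMS : is_TLMS R gens lface pi mu slope r.

Lemma mu_gt0 c : (0 < mu c)%N.
Proof. by case: L_TLMS => _ _ _ []. Qed.

Lemma lface_over c t : sface R gens t (pi c) -> exists2 d, lface d c & pi d = t.
Proof. by case: L_TLMS => _ _ face_lift _ _ /face_lift[d []]; exists d. Qed.

Lemma lface_over_uniq c d1 d2 :
  lface d1 c -> lface d2 c -> pi d1 = pi d2 -> d1 = d2.
Proof.
case: L_TLMS => _ face_pi face_lift _ _ d1c d2c pi_d12.
have [d [_ _ uniq_d]] := face_lift c (pi d1) (face_pi _ _ d1c).
by rewrite (uniq_d d1) // (uniq_d d2).
Qed.

Lemma mu_common_face d c1 c2 :
  lface d c1 -> lface d c2 -> c1 != c2 -> pi c1 = pi c2 ->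
  (mu c1 + mu c2 <= mu d)%N.
Proof.
case: L_TLMS => _ face_pi _ [_ _ fibre] _ dc1 dc2 c12 pi_c12.
rewrite -(fibre d (pi c1) (face_pi _ _ dc1)).
rewrite (bigD1 c1) ?dc1 ?eqxx //= (bigD1 c2) /= ?dc2 ?pi_c12 ?eqxx 1?eq_sym //.
by rewrite addnA leq_addr.
Qed.

Hypothesis L_ram : ramification_codim2 R gens pi mu.

Lemma mu_eq1_codim1 c : (n <= (cone_dim R (gens (pi c))).+1)%N -> mu c = 1%N.
Proof.
move=> dim_ge; have [/L_ram dim_le|] := ltnP 1 (mu c).
  by have := leq_trans dim_le dim_ge; rewrite ltnn.
by case: (mu c) (mu_gt0 c) => [|[]].
Qed.

Hypothesis L_sep : separable_codim1 R gens pi slope.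
Variable tau : Sig.
Hypothesis tau_codim1 : (cone_dim R (gens tau)).+1 = n.

Lemma slope_dual_anti c1 c2 :
  sface R gens tau (pi c1) -> pi c1 = pi c2 -> c1 != c2 ->
  in_dual R (gens tau) (slope c1 - slope c2) ->
  in_dual R (gens tau) (slope c2 - slope c1) -> False.
Proof.
move=> tau_c1 pi_c12 c12 dual12 dual21.
have [d1 d1c1 pi_d1] := lface_over tau_c1.
have [d2 d2c2 pi_d2] : exists2 d, lface d c2 & pi d = tau.
  by apply: lface_over; rewrite -pi_c12.
have d12 : d1 <> d2.
  have mu_d1 : mu d1 = 1%N by apply: mu_eq1_codim1; rewrite pi_d1 tau_codim1.
  move=> eq_d; subst d2; have := mu_common_face d1c1 d2c2 c12 pi_c12.
  by rewrite mu_d1; move/(leq_trans (leq_add (mu_gt0 c1) (mu_gt0 c2))).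
have [v [tau_v slope_neq]] := L_sep tau_codim1 pi_d1 pi_d2 d12.
case: L_TLMS => _ _ _ _ slope_face; apply: slope_neq.
rewrite -(slope_face _ _ d1c1) ?pi_d1 // -(slope_face _ _ d2c2) ?pi_d2 //.
exact: in_dual_subr_anti dual12 dual21 tau_v.
Qed.

Definition slope_lt (c1 c2 : Lc) : bool :=
  (c1 != c2) && `[< in_dual R (gens tau) (slope c1 - slope c2) >].

Lemma slope_lt_trans s c1 c2 c3 :
  sface R gens tau s -> pi c1 = s -> pi c2 = s -> pi c3 = s ->
  slope_lt c1 c2 -> slope_lt c2 c3 -> slope_lt c1 c3.
Proof.
move=> tau_s pi1 pi2 pi3 /andP[c12 /asboolP dual12] /andP[c23 /asboolP dual23].
have dual13 := in_dual_subr_trans dual12 dual23.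
rewrite /slope_lt (asboolT dual13) andbT; apply/eqP => eq13; subst c3.
by apply: (slope_dual_anti _ _ c12 dual12 dual23); rewrite ?pi1 ?pi2.
Qed.

Variable lift : 'I_r -> Lc.

Lemma Nmx_neq0 (ncst : 'I_r -> 'I_r -> CC R) w a b :
  Nmx gens lface slope tau lift ncst w a b != 0 ->
  [/\ lface w (lift a), lface w (lift b), a != b &
      in_dual R (gens tau) (slope (lift a) - slope (lift b))].
Proof.
rewrite mxE; case: ifP => [/andP[/andP[wa wb] ab]|_]; last by rewrite eqxx.
by destruct excluded_middle_informative; rewrite ?eqxx.
Qed.

Lemma Nmx_mul_eq0 (ncst1 ncst2 : 'I_r -> 'I_r -> CC R) w1 w2 :
  w1 <> w2 -> pi w1 = pi w2 ->
  Nmx gens lface slope tau lift ncst1 w1 *m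
  Nmx gens lface slope tau lift ncst2 w2 = 0.
Proof.
move=> w12 pi_w12; apply: mulmx_eq0_support => a b c.
move=> /Nmx_neq0[_ w1b _ _] /Nmx_neq0[w2b _ _ _].
by apply: w12; apply: lface_over_uniq w1b w2b pi_w12.
Qed.

Lemma Nmx_nilpotent s (ncst : 'I_r -> 'I_r -> CC R) w :
  sface R gens tau s -> cone_dim R (gens s) = n ->
  (forall c, #|[set a | lift a == c]| = (if pi c == s then mu c else 0%N)) ->
  Nmx gens lface slope tau lift ncst w ^+ r = 0.
Proof.
move=> tau_s dim_s lift_card; have lift_s := lift_over lift_card.
have mu_lift a : mu (lift a) = 1%N.
  by apply: mu_eq1_codim1; rewrite lift_s dim_s.
pose lt a b := slope_lt (lift a) (lift b).
apply: (@mx_strict_support_nilpotent _ _ lt) => [a | b a c | a b].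
- by rewrite /lt /slope_lt eqxx.
- exact: slope_lt_trans tau_s (lift_s a) (lift_s b) (lift_s c).
- case/Nmx_neq0 => _ _ ab dual_ab; rewrite /lt /slope_lt (asboolT dual_ab).
  by rewrite andbT; apply: contraNneq ab => /(lift_inj lift_card mu_lift) ->.
Qed.

End TropicalLagrangian.

Theorem lemma4p12 (R : realType) (n : nat)
  (Sig : finType) (gens : Sig -> seq 'rV[int]_n)
  (Lc : finType) (lface : rel Lc) (pi : Lc -> Sig) (mu : Lc -> nat)
  (slope : Lc -> 'rV[int]_n) (r : nat)
  (HSig : complete_fan R gens)
  (HL : is_TLMS R gens lface pi mu slope r)
  (Hind : comb_indecomposable R gens pi mu slope)
  (tau sigma1 sigma2 : Sig)
  (Htau : (cone_dim R (gens tau)).+1 = n)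
  (Hs1 : cone_dim R (gens sigma1) = n) (Hs2 : cone_dim R (gens sigma2) = n)
  (Hint : forall v : 'rV[R]_n, cone_of (gens tau) v <->
            (cone_of (gens sigma1) v /\ cone_of (gens sigma2) v))
  (lift : 'I_r -> Lc)
  (Hlift : forall c, #|[set a | lift a == c]| = (if pi c == sigma1 then mu c else 0%N))
  (ncst : Lc -> 'I_r -> 'I_r -> CC R) :
  let N := fun w => Nmx gens lface slope tau lift (ncst w) w in
  [/\ forall w, exists k, N w ^+ k = 0,
      forall w1 w2, w1 <> w2 -> pi w1 = pi w2 -> N w1 *m N w2 = 0 &
      forall w1 w2, pi w1 = pi w2 -> N w1 *m N w2 - N w2 *m N w1 = 0].
Proof.
move=> N; case: HSig Hind => [fan _] [sep ram].
have N_mul0 w1 w2 : w1 <> w2 -> pi w1 = pi w2 -> N w1 *m N w2 = 0.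
  exact: (Nmx_mul_eq0 HL tau lift (ncst w1) (ncst w2)).
split=> [w | // | w1 w2 pi_w12].
  have tau_sigma1 := sface_of_meet fan Hint.
  by exists r; apply: (Nmx_nilpotent HL ram sep Htau (ncst w) w tau_sigma1).
have [->|/eqP w12] := eqVneq w1 w2; first by rewrite subrr.
have w21 : w2 <> w1 by move/esym.
by rewrite (N_mul0 _ _ w12 pi_w12) (N_mul0 _ _ w21 (esym pi_w12)) subrr.
Qed.
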